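(* Let $\mathcal{P}=(|K|,V)$ be a polyhedral model with cell poset model $\mathbb{F}(\mathcal{P})=(\tilde K,\preceq,\mathcal{V})$. For every $\downarrow$-path $\pi:[0;\ell]\to\tilde K$ there is a topological path $\pi':[0,1]\to|K|$ such that (i) $\mathbb{F}(\pi'(0))=\pi(0)$, (ii) $\mathbb{F}(\pi'(1))=\pi(\ell)$, and (iii) for every $r\in(0,1)$ there is $i<\ell$ with $\mathbb{F}(\pi'(r))=\pi(i)$.
   Context: Fix a set PL of proposition letters. A simplex $\sigma\subseteq\mathbb{R}^m$ is the convex hull of $d+1$ affinely independent points $v_0,\dots,v_d$; its faces are the simplices spanned by nonempty subsets of its vertices. Its relative interior (cell) is $\tilde\sigma=\{\sum_i\lambda_iv_i:\lambda_i\in(0,1],\sum_i\lambda_i=1\}$. A simplicial complex $K$ is a finite set of simplices in $\mathbb{R}^m$ closed under faces, any two of which intersect in a common face or in $\emptyset$. Its set of cells $\tilde K=\{\tilde\sigma:\sigma\in K\}$ is partially ordered by $\tilde\sigma_1\preceq\tilde\sigma_2$ iff $\tilde\sigma_1$ is contained in the topological closure of $\tilde\sigma_2$ (equivalently, $\sigma_1$ is a face of $\sigma_2$). The polyhedron $|K|$ is the union of the simplices of $K$ with the subspace topology; its cells partition $|K|$. A polyhedral model is $\mathcal{P}=(|K|,V)$ with $V:\mathrm{PL}\to\mathcal{P}(|K|)$ such that each $V(p)$ is a union of cells. Its cell poset model is $\mathbb{F}(\mathcal{P})=(\tilde K,\preceq,\mathcal{V})$ with $\tilde\sigma\in\mathcal{V}(p)$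 iff $\tilde\sigma\subseteq V(p)$; for $x\in|K|$, $\mathbb{F}(x)$ is the unique cell containing $x$. A topological path is a continuous map $[0,1]\to|K|$. In a poset $(W,\preceq)$, a $\downarrow$-path of length $\ell\ge1$ is $\pi:\{0,\dots,\ell\}\to W$ with $\pi(i),\pi(i+1)$ comparable under $\preceq$ for each $i<\ell$, and $\pi(\ell)\preceq\pi(\ell-1)$. *)

From HB Require Import structures.
From mathcomp Require Import all_boot all_order all_algebra.
From mathcomp Require Import all_classical all_reals all_analysis.
Set Implicit Arguments. Unset Strict Implicit. Unset Printing Implicit Defensive.
Import Order.TTheory GRing.Theory Num.Theory.
Import numFieldNormedType.Exports.
Local Open Scope classical_set_scope.
Local Open Scope ring_scope.

Section Simplicial.
Variables (R : realType) (m : nat).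
Local Notation pt := 'rV[R]_m.

(* A simplex is given by its (finite) list of vertices. *)
Definition aff_indep (s : seq pt) : Prop :=
  forall mu : 'I_(size s) -> R,
    \sum_(i < size s) mu i = 0 ->
    \sum_(i < size s) mu i *: s`_i = 0 ->
    forall i, mu i = 0.

Definition hull (s : seq pt) : set pt :=
  [set x | exists lam : 'I_(size s) -> R,
     (forall i, 0 <= lam i <= 1) /\ \sum_(i < size s) lam i = 1 /\
     x = \sum_(i < size s) lam i *: s`_i].

Definition relint (s : seq pt) : set pt :=
  [set x | exists lam : 'I_(size s) -> R,
     (forall i, 0 < lam i <= 1) /\ \sum_(i < size s) lam i = 1 /\
     x = \sum_(i < size s) lam i *: s`_i].

Definition face (tau sigma : seq pt) : Prop :=
  tau != [::] /\ {subset tau <= sigma}.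

Definition simplicial_complex (K : seq (seq pt)) : Prop :=
  (forall sigma, sigma \in K -> sigma != [::] /\ aff_indep sigma) /\
  (forall sigma tau, sigma \in K -> face tau sigma ->
     exists2 sigma', sigma' \in K & sigma' =i tau) /\
  (forall s1 s2, s1 \in K -> s2 \in K ->
     hull s1 `&` hull s2 = set0 \/
     exists tau, [/\ face tau s1, face tau s2 & hull s1 `&` hull s2 = hull tau]).

Definition polyhedron (K : seq (seq pt)) : set pt :=
  [set x | exists2 sigma, sigma \in K & hull sigma x].

Definition cells (K : seq (seq pt)) : set (set pt) :=
  [set c | exists2 sigma, sigma \in K & c = relint sigma].

Definition cell_le (c1 c2 : set pt) : Prop := c1 `<=` closure c2.

Definition polyhedral_valuation (PL : Type) (K : seq (seq pt)) (V : PL -> set pt) : Prop :=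
  forall p, exists C : set (set pt), C `<=` cells K /\ V p = \bigcup_(c in C) c.

Definition down_path (K : seq (seq pt)) (l : nat) (pi : nat -> set pt) : Prop :=
  [/\ (1 <= l)%N,
      (forall i, (i <= l)%N -> cells K (pi i)),
      (forall i, (i < l)%N -> cell_le (pi i) (pi i.+1) \/ cell_le (pi i.+1) (pi i)) &
      cell_le (pi l) (pi l.-1)].

Definition topo_path (K : seq (seq pt)) (f : R -> pt) : Prop :=
  {within `[0, 1], continuous f} /\ (forall r, 0 <= r <= 1 -> polyhedron K (f r)).

End Simplicial.

From HB Require Import structures.
From mathcomp Require Import all_boot all_order all_algebra.
From mathcomp Require Import all_classical all_reals all_analysis.
From mathcomp Require Import lra.
Set Implicit Arguments. Unset Strict Implicit. Unset Printing Implicit Defensive.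
Import Order.TTheory GRing.Theory Num.Theory.
Import numFieldNormedType.Exports.
Local Open Scope classical_set_scope.
Local Open Scope ring_scope.

(* Pick a point x_i in each cell pi(i) and walk along the polygon x_0, ..., x_l.
   The closure of a cell is its (closed) simplex, and the half-open segment from
   a point of the closed simplex to a point of the open cell stays in the cell.
   Hence on the open segment between x_i and x_(i+1) the path lies in whichever
   of pi(i), pi(i+1) is the larger cell; this is pi(i) for the last segment
   because the path ends with a downward step. *)

Section Simplex.
Variables (R : realType) (m : nat).
Local Notation pt := 'rV[R]_m.

Definition lerp (x y : pt) (t : R) : pt := (1 - t) *: x + t *: y.

Lemma lerpC x y t : lerp x y t = lerp y x (1 - t).
Proof. by rewrite /lerp subKr addrC. Qed.

Lemma lerp0 x y : lerp x y 0 = x.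
Proof. by rewrite /lerp subr0 scale1r scale0r addr0. Qed.

Lemma relint_hull (s : seq pt) : relint s `<=` hull s.
Proof.
move=> _ [lam [lam01 [lam1 ->]]]; exists lam; split => // i.
by have /andP[/ltW -> ->] := lam01 i.
Qed.

(* The simplex is the image of the compact standard simplex under a linear map. *)
Lemma hull_closed (s : seq pt) : closed (hull s).
Proof.
pose n := size s.
pose coef : set 'rV[R]_n := [set v | forall i, `[0, 1]%classic (v ord0 i)].
pose total : set 'rV[R]_n := [set v | \sum_(i < n) v ord0 i = 1].
pose comb := fun v : 'rV[R]_n => \sum_(i < n) v ord0 i *: s`_i.
have coef_compact : compact coef :=
  @rV_compact R n (fun=> `[0, 1]%classic) (fun=> @segment_compact R 0 1).
have total_closed : closed total.
  have -> : total = (fun v : 'rV[R]_n => \sum_(i < n) v ord0 i) @^-1` [set 1] by [].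
  apply: (proj1 (continuous_closedP _)); last exact: closed_eq.
  apply: continuous_big => [|i _]; first exact: add_continuous.
  exact: coord_continuous.
have comb_continuous : continuous comb.
  apply: continuous_big => [|i _ v]; first exact: add_continuous.
  by apply: continuousZr_tmp; exact: coord_continuous.
have -> : hull s = comb @` (coef `&` total).
  apply/seteqP; split => [x [lam [lam01 [lam1 ->]]]|_ [v [v01 v1] <-]].
  - exists (\row_i lam i); last by rewrite /comb; under eq_bigr do rewrite mxE.
    split => [i|]; first by rewrite /= mxE in_itv /=.
    by rewrite /total /=; under eq_bigr do rewrite mxE.
  - by exists (fun i => v ord0 i).
apply: compact_closed; first exact: norm_hausdorff.
apply: continuous_compact; last exact: compact_closedI.
exact: continuous_subspaceT.
Qed.

Lemma closure_relint (s : seq pt) : closure (relint s) `<=` hull s.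
Proof. by move=> x /(closureS (@relint_hull s)) /(@hull_closed s). Qed.

Lemma relint_lerp (s : seq pt) x y t :
  hull s x -> relint s y -> 0 < t <= 1 -> relint s (lerp x y t).
Proof.
move=> [lam [lam01 [lam1 ->]]] [mu [mu01 [mu1 ->]]] /andP[t0 t1].
exists (fun i => (1 - t) * lam i + t * mu i); split; [|split].
- move=> i; have /andP[l0 l1] := lam01 i; have /andP[m0 m1] := mu01 i.
  have : (1 - t) * lam i <= 1 - t by rewrite ler_piMr // subr_ge0.
  have : t * mu i <= t by rewrite ler_piMr // ltW.
  have : 0 < t * mu i by exact: mulr_gt0.
  have : 0 <= (1 - t) * lam i by rewrite mulr_ge0 // subr_ge0.
  lra.
- by rewrite big_split /= -!mulr_sumr lam1 mu1 !mulr1 subrK.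
- rewrite /lerp !scaler_sumr -big_split /=; apply: eq_bigr => i _.
  by rewrite !scalerA -scalerDl.
Qed.

Lemma relint_nonempty (s : seq pt) : s != [::] -> exists x, relint s x.
Proof.
move=> s_neq0; have s_gt0 : (0 < size s)%N by case: s s_neq0.
exists (\sum_(i < size s) (size s)%:R^-1 *: s`_i).
exists (fun _ => (size s)%:R^-1); split; [|split] => //.
- move=> _; rewrite invr_gt0 ltr0n s_gt0 /=.
  by rewrite invf_le1 ?ltr0n // ler1n.
- by rewrite sumr_const card_ord -[_ *+ _]mulr_natr mulVf // pnatr_eq0 -lt0n.
Qed.

Lemma cell_nonempty (K : seq (seq pt)) c :
  simplicial_complex K -> cells K c -> exists x, c x.
Proof.
move=> [simplexK _] [s sK ->].
by have [s_neq0 _] := simplexK s sK; exact: relint_nonempty.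
Qed.

Lemma cell_polyhedron (K : seq (seq pt)) c : cells K c -> c `<=` polyhedron K.
Proof. by move=> [s sK ->] x /relint_hull; exists s. Qed.

Lemma cell_lerp (K : seq (seq pt)) c c' x y t :
  cells K c' -> cell_le c c' -> c x -> c' y -> 0 < t <= 1 -> c' (lerp x y t).
Proof.
move=> [s _ ->] le_cc' cx; apply: relint_lerp.
exact/closure_relint/le_cc'.
Qed.

End Simplex.

Section PolygonalPath.
Variables (R : realType) (m : nat).
Local Notation pt := 'rV[R]_m.

Definition clamp01 (u : R) : R := Num.min (Num.max u 0) 1.

Lemma clamp01_le0 u : u <= 0 -> clamp01 u = 0.
Proof. by rewrite /clamp01 => u0; rewrite max_r // min_l. Qed.

Lemma clamp01_ge1 u : 1 <= u -> clamp01 u = 1.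
Proof. by rewrite /clamp01 => u1; rewrite max_l ?min_r // (le_trans ler01). Qed.

Lemma clamp01_id u : 0 <= u <= 1 -> clamp01 u = u.
Proof. by rewrite /clamp01 => /andP[u0 u1]; rewrite max_l // min_l. Qed.

Lemma continuous_clamp01_affine (a b : R) :
  continuous (fun r : R => clamp01 (a * r - b)).
Proof.
move=> r; apply: (@continuous_min R R (fun r => Num.max (a * r - b) 0) (fun=> 1));
  last exact: cvg_cst.
apply: (@continuous_max R R (fun r => a * r - b) (fun=> 0)); last exact: cvg_cst.
apply: continuousB; last exact: cvg_cst.
by apply: continuousM; [exact: cvg_cst | exact: cvg_id].
Qed.

(* On [i/l, (i+1)/l] only the i-th coefficient is strictly between 0 and 1. *)
Definition polygonal_path (l : nat) (x : nat -> pt) (r : R) : pt :=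
  x 0%N + \sum_(i < l) clamp01 (l%:R * r - i%:R) *: (x i.+1 - x i).

Lemma polygonal_path_lerp l x k t r :
  (k < l)%N -> 0 <= t <= 1 -> l%:R * r = k%:R + t ->
  polygonal_path l x r = lerp (x k) (x k.+1) t.
Proof.
move=> kl /andP[t0 t1] lr; rewrite /polygonal_path lr.
rewrite -(big_mkord xpredT (fun i => clamp01 (k%:R + t - i%:R) *: (x i.+1 - x i))).
rewrite (big_cat_nat _ (n := k)) //= ?(ltnW kl) // [\sum_(k <= i < l) _]big_ltn //.
rewrite [X in _ + (_ + (_ + X))]big1_seq => [|i]; last first.
  rewrite mem_index_iota => /andP[_ /andP[ki _]].
  have : k.+1%:R <= i%:R :> R by rewrite ler_nat.
  by rewrite -addn1 natrD => ?; rewrite clamp01_le0 ?scale0r //; lra.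
rewrite (@eq_big_nat _ _ _ 0 k _ (fun i => x i.+1 - x i)) => [|i /andP[_ ik]].
  rewrite telescope_sumr // addr0 addrA subrKC [k%:R + t]addrC addrK.
  rewrite clamp01_id; last lra.
  by rewrite /lerp scalerBl scale1r scalerBr addrA addrAC.
have : i.+1%:R <= k%:R :> R by rewrite ler_nat.
by rewrite -addn1 natrD => ?; rewrite clamp01_ge1 ?scale1r //; lra.
Qed.

Lemma polygonal_path0 l x : polygonal_path l x 0 = x 0%N.
Proof.
rewrite /polygonal_path big1 ?addr0 // => i _.
by rewrite mulr0 sub0r clamp01_le0 ?scale0r // oppr_le0.
Qed.

Lemma polygonal_path1 l x : (0 < l)%N -> polygonal_path l x 1 = x l.
Proof.
move=> l_gt0; rewrite (@polygonal_path_lerp _ _ l.-1 1) ?prednK ?lexx ?ler01 //.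
  by rewrite /lerp subrr scale0r add0r scale1r.
by rewrite mulr1 natr1 prednK.
Qed.

Lemma polygonal_path_segment l x r : (0 < l)%N -> 0 <= r -> r < 1 ->
  exists k t, [/\ (k < l)%N, 0 <= t < 1 & polygonal_path l x r = lerp (x k) (x k.+1) t].
Proof.
move=> l_gt0 r0 r1.
have lr0 : 0 <= l%:R * r by rewrite mulr_ge0.
have lr_lt : l%:R * r < l%:R by rewrite -[ltRHS]mulr1 ltr_pM2l ?ltr0n.
have /andP[kr rk] := truncn_itv lr0; set k := Num.truncn _ in kr rk.
move: rk; rewrite -addn1 natrD => rk.
have kl : (k < l)%N by rewrite -(ltr_nat R) (le_lt_trans kr).
exists k, (l%:R * r - k%:R); split => //; first lra.
by apply: polygonal_path_lerp => //; lra.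
Qed.

Lemma continuous_polygonal_path l x : continuous (polygonal_path l x).
Proof.
move=> r; apply: continuousD; first exact: cvg_cst.
apply: continuous_big => [|i _ s]; first exact: add_continuous.
exact: continuousZr_tmp (@continuous_clamp01_affine l%:R i%:R s).
Qed.

End PolygonalPath.

Section DownPath.
Variables (R : realType) (m : nat) (K : seq (seq 'rV[R]_m)).
Variables (l : nat) (pi : nat -> set 'rV[R]_m).
Hypothesis pi_down : down_path K l pi.

Lemma down_path_points : simplicial_complex K ->
  {x : nat -> 'rV[R]_m & forall i, (i <= l)%N -> pi i (x i)}.
Proof.
case: pi_down => _ pi_cell _ _ HK.
apply: (@choice _ _ (fun i y => (i <= l)%N -> pi i y)) => i.
case: (leqP i l) => [il | _]; last by exists 0.
by have [y ?] := cell_nonempty HK (pi_cell i il); exists y.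
Qed.

Lemma down_path_polyhedron i : (i <= l)%N -> pi i `<=` polyhedron K.
Proof. by case: pi_down => _ pi_cell _ _ /pi_cell/cell_polyhedron. Qed.

Lemma down_path_lerp k x y t : (k < l)%N -> pi k x -> pi k.+1 y -> 0 <= t < 1 ->
  exists2 i, (i < l)%N & pi i (lerp x y t).
Proof.
case: pi_down => _ pi_cell pi_step pi_last kl xk yk1 /andP[t0 t1].
have [->|t_neq0] := eqVneq t 0; first by exists k; rewrite ?lerp0.
have t_gt0 : 0 < t by rewrite lt0r t_neq0.
have [down|not_down] := pselect (cell_le (pi k.+1) (pi k)).
  exists k => //; rewrite lerpC.
  by apply: cell_lerp (pi_cell k (ltnW kl)) down yk1 xk _; lra.
have k1l : (k.+1 < l)%N.
  rewrite ltn_neqAle kl andbT; apply/eqP => k1l; apply: not_down.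
  by rewrite -k1l in pi_last.
have up : cell_le (pi k) (pi k.+1) by case: (pi_step k kl).
exists k.+1 => //.
by apply: cell_lerp (pi_cell k.+1 kl) up xk yk1 _; lra.
Qed.

End DownPath.

Theorem lemma10 (R : realType) (m : nat) (PL : Type)
  (K : seq (seq 'rV[R]_m)) (V : PL -> set 'rV[R]_m)
  (HK : simplicial_complex K) (HV : polyhedral_valuation K V)
  (l : nat) (pi : nat -> set 'rV[R]_m) (Hpi : down_path K l pi) :
  exists f : R -> 'rV[R]_m,
    [/\ topo_path K f,
        pi 0%N (f 0),
        pi l (f 1) &
        forall r, 0 < r < 1 -> exists2 i, (i < l)%N & pi i (f r)].
Proof.
have [x xP] := down_path_points Hpi HK.
have l_gt0 : (0 < l)%N by case: Hpi.
have f0 : pi 0%N (polygonal_path l x 0) by rewrite polygonal_path0; exact: xP.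
have f1 : pi l (polygonal_path l x 1) by rewrite polygonal_path1 //; exact: xP.
have f_mid r : 0 < r < 1 -> exists2 i, (i < l)%N & pi i (polygonal_path l x r).
  move=> /andP[r0 r1].
  have [k [t [kl t01 ->]]] := polygonal_path_segment x l_gt0 (ltW r0) r1.
  exact: (down_path_lerp Hpi kl (xP k (ltnW kl)) (xP k.+1 kl) t01).
exists (polygonal_path l x); split => //.
split; first exact/continuous_subspaceT/continuous_polygonal_path.
move=> r /andP[r0 r1].
have [->|r_neq0] := eqVneq r 0; first exact: (down_path_polyhedron Hpi (leq0n l) f0).
have [->|r_neq1] := eqVneq r 1; first exact: (down_path_polyhedron Hpi (leqnn l) f1).
have [|i il pi_f] := f_mid r; first by rewrite lt0r r_neq0 r0 lt_neqAle r_neq1 r1.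
exact: (down_path_polyhedron Hpi (ltnW il) pi_f).
Qed.
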